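(* Let $k$ be a field, let $\mathrm{\underline{Rep}}(\mathbb{G})$ be the Delannoy category over $k$, and let $X$ be a $\mathbb{G}$-set. Identify $\Gamma(\mathcal{C}(X)\otimes\mathcal{C}(X))=\Gamma(\mathcal{C}(X\times X))$ with the algebra of $\mathbb{G}$-invariant $k$-valued functions on $X\times X$ under pointwise multiplication. Then an element $\gamma$ of this algebra is an E-idempotent of $\mathcal{C}(X)$ if and only if it is the indicator function of a $\mathbb{G}$-stable equivalence relation $R\subset X\times X$; thus E-idempotents of $\mathcal{C}(X)$ correspond bijectively to $\mathbb{G}$-stable equivalence relations on $X$.
   Context: $\mathbb{G}=\mathrm{Aut}(\mathbf{R},<)$, topologized so that pointwise stabilizers of finite subsets form a neighborhood basis of $1$; a $\mathbb{G}$-set is a set with an action having open stabilizers and finitely many orbits. The Delannoy category is the Karoubi envelope of Harman–Snowden's $\mathrm{\underline{Perm}}(\mathbb{G},\mu)$ for the measure $\mu$ with $\mu(\mathbf{R}^{(n)})=(-1)^n$; its objects $\mathcal{C}(X)$ (Schwartz spaces) are étale commutative algebras, $\mathcal{C}(X)\otimes\mathcal{C}(Y)=\mathcal{C}(X\times Y)$, and $\Gamma(\mathcal{C}(X))=\mathrm{Hom}(\mathbf{1},\mathcal{C}(X))$ is the algebra of $\mathbb{G}$-invariant functions on $X$ under pointwise multiplication. For an étale algebra $B$, an E-idempotent is an idempotent $\gamma\in\Gamma(B\otimes B)$ such that (a) $m(\gamma)=1$ where $m:B\otimes B\to B$ is multiplication; (b) $\tau(\gamma)=\gamma$ where $\tau$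 is the symmetry of $B\otimes B$; (c) writing $\gamma_{i,j}\in\Gamma(B^{\otimes3})$ for $\gamma$ placed in factors $i,j$ and $1$ in the remaining factor, $\gamma_{1,2}\gamma_{2,3}=\gamma_{1,2}\gamma_{1,3}=\gamma_{1,3}\gamma_{2,3}$. *)

From Stdlib Require Import Reals.
From mathcomp Require Import all_boot all_algebra.
Set Implicit Arguments. Unset Strict Implicit. Unset Printing Implicit Defensive.
Import GRing.Theory.

(* Elements of G = Aut(R,<): order-preserving bijections of the real line. *)
Record ordAut := OrdAut {
  oa_fun : R -> R;
  oa_inv : R -> R;
  oa_K : forall t, oa_inv (oa_fun t) = t;
  oa_Kinv : forall t, oa_fun (oa_inv t) = t;
  oa_mono : forall s t, Rlt s t -> Rlt (oa_fun s) (oa_fun t)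
}.

(* A G-set: an action of G on X (axioms stated extensionally on the
   underlying functions), with open stabilizers (each stabilizer contains
   the pointwise stabilizer of a finite subset of R) and finitely many orbits. *)
Definition is_Gset (X : Type) (act : ordAut -> X -> X) : Prop :=
  [/\ (forall g : ordAut, (forall t, oa_fun g t = t) -> forall x, act g x = x),
      (forall g h gh : ordAut, (forall t, oa_fun gh t = oa_fun g (oa_fun h t)) ->
          forall x, act gh x = act g (act h x)),
      (forall x : X, exists (n : nat) (A : 'I_n -> R),
          forall g : ordAut, (forall i, oa_fun g (A i) = A i) -> act g x = x)
    & (exists (n : nat) (xs : 'I_n -> X),
          forall x : X, exists (i : 'I_n) (g : ordAut), x = act g (xs i))].

(* Gamma(C(X) (x) C(X)) = Gamma(C(X x X)) = G-invariant k-valued functions on X x X. *)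
Definition G_invariant2 (k : fieldType) (X : Type) (act : ordAut -> X -> X)
  (gamma : X * X -> k) : Prop :=
  forall (g : ordAut) (x y : X), gamma (act g x, act g y) = gamma (x, y).

(* Under the identification, with pointwise multiplication:
   - multiplication m : C(X x X) -> C(X) is pullback along the diagonal;
   - the symmetry tau is pullback along the swap (x,y) |-> (y,x);
   - gamma_{i,j} in Gamma(C(X x X x X)) is gamma evaluated at coordinates i,j. *)
Definition m_diag (k : fieldType) (X : Type) (gamma : X * X -> k) : X -> k :=
  fun x => gamma (x, x).
Definition tau_swap (k : fieldType) (X : Type) (gamma : X * X -> k) : X * X -> k :=
  fun p => gamma (p.2, p.1).
Definition gamma12 (k : fieldType) (X : Type) (gamma : X * X -> k) : X * X * X -> k :=
  fun p => gamma (p.1.1, p.1.2).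
Definition gamma13 (k : fieldType) (X : Type) (gamma : X * X -> k) : X * X * X -> k :=
  fun p => gamma (p.1.1, p.2).
Definition gamma23 (k : fieldType) (X : Type) (gamma : X * X -> k) : X * X * X -> k :=
  fun p => gamma (p.1.2, p.2).

Definition is_E_idempotent (k : fieldType) (X : Type) (act : ordAut -> X -> X)
  (gamma : X * X -> k) : Prop :=
  [/\ G_invariant2 act gamma,
      (forall p, (gamma p * gamma p = gamma p)%R),
      (forall x, m_diag gamma x = 1%R),
      (forall p, tau_swap gamma p = gamma p)
    & (forall p, (gamma12 gamma p * gamma23 gamma p = gamma12 gamma p * gamma13 gamma p)%R
              /\ (gamma12 gamma p * gamma13 gamma p = gamma13 gamma p * gamma23 gamma p)%R)].

Definition G_stable_equivalence (X : Type) (act : ordAut -> X -> X)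
  (Rel : X -> X -> bool) : Prop :=
  [/\ (forall x, Rel x x),
      (forall x y, Rel x y -> Rel y x),
      (forall x y z, Rel x y -> Rel y z -> Rel x z)
    & (forall (g : ordAut) x y, Rel x y -> Rel (act g x) (act g y))].

Definition indicator (k : fieldType) (X : Type) (Rel : X -> X -> bool) : X * X -> k :=
  fun p => ((Rel p.1 p.2)%:R)%R.

From Stdlib Require Import Reals.
From mathcomp Require Import all_boot all_algebra.
From Stdlib Require Import FunctionalExtensionality.
Import GRing.Theory.

Set Implicit Arguments.
Unset Strict Implicit.
Unset Printing Implicit Defensive.

Local Open Scope ring_scope.

(* An idempotent k-valued function takes only the values 0 and 1, so it is the
   indicator of the relation "gamma (x, y) = 1"; then m(gamma) = 1, tau-symmetry
   and the triple identity gamma12 gamma23 = gamma12 gamma13 = gamma13 gamma23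
   say exactly that this relation is reflexive, symmetric and transitive, while
   G-invariance of gamma is G-stability of the relation.  Nothing about the
   group or the G-set structure of X is needed beyond that. *)

Lemma idempotent_eq01 (k : idomainType) (a : k) :
  a * a = a -> a = 0 \/ a = 1.
Proof.
move=> aa_a; have /eqP : a * (a - 1) = 0 by rewrite mulrBr mulr1 aa_a subrr.
rewrite mulf_eq0 subr_eq0 => /orP[] /eqP ->; by [left | right].
Qed.

Lemma natr_bool_inj (k : nzRingType) : injective (fun b : bool => b%:R : k).
Proof. by case; case=> // /eqP; rewrite ?oner_eq0 // eq_sym oner_eq0. Qed.

Lemma natr_andb (k : nzSemiRingType) (a b : bool) :
  a%:R * b%:R = (a && b)%:R :> k.
Proof. by rewrite -natrM mulnb. Qed.

Section IndicatorCorrespondence.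

Variables (k : fieldType) (X : Type) (act : ordAut -> X -> X).

Definition rel_eq1 (gamma : X * X -> k) : X -> X -> bool :=
  fun x y => gamma (x, y) == 1.

Lemma indicator_inj : injective (@indicator k X).
Proof.
move=> Rel1 Rel2 eq_ind.
apply: functional_extensionality => x; apply: functional_extensionality => y.
exact: natr_bool_inj (f_equal (fun f => f (x, y)) eq_ind).
Qed.

Lemma idempotent_indicator (gamma : X * X -> k) :
  (forall p, gamma p * gamma p = gamma p) ->
  gamma = indicator k (rel_eq1 gamma).
Proof.
move=> gamma_idem; apply: functional_extensionality => -[x y].
rewrite /indicator /rel_eq1 /=.
by case: (idempotent_eq01 (gamma_idem (x, y))) => ->; rewrite ?eqxx // eq_sym oner_eq0.
Qed.

Lemma E_idempotent_equivalence (gamma : X * X -> k) :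
  is_E_idempotent act gamma ->
  G_stable_equivalence act (rel_eq1 gamma).
Proof.
case=> gamma_inv _ gamma_diag gamma_sym gamma_triple; split.
- by move=> x; apply/eqP; apply: gamma_diag.
- by move=> x y /eqP gxy; apply/eqP; rewrite -gxy; exact: gamma_sym (x, y).
- move=> x y z /eqP gxy /eqP gyz; apply/eqP.
  have [+ _] := gamma_triple (x, y, z).
  by rewrite /gamma12 /gamma23 /gamma13 /= gxy gyz !mul1r.
- by move=> g x y /eqP gxy; apply/eqP; rewrite gamma_inv.
Qed.

Lemma equivalence_andb (Rel : X -> X -> bool) x y z :
  G_stable_equivalence act Rel ->
  Rel x y && Rel y z = Rel x y && Rel x z /\
  Rel x y && Rel x z = Rel x z && Rel y z.
Proof.
case=> _ Rsym Rtrans _.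
case Rxy: (Rel x y); case Ryz: (Rel y z); case Rxz: (Rel x z) => //; exfalso.
- by move: (Rtrans _ _ _ Rxy Ryz); rewrite Rxz.
- by move: (Rtrans _ _ _ (Rsym _ _ Rxy) Rxz); rewrite Ryz.
- by move: (Rtrans _ _ _ Rxz (Rsym _ _ Ryz)); rewrite Rxy.
Qed.

Lemma indicator_E_idempotent (Rel : X -> X -> bool) :
  G_invariant2 act (indicator k Rel) -> G_stable_equivalence act Rel ->
  is_E_idempotent act (indicator k Rel).
Proof.
move=> ind_inv Requiv; have [Rrefl Rsym _ _] := Requiv; split => //.
- by move=> p; rewrite /indicator natr_andb andbb.
- by move=> x; rewrite /m_diag /indicator /= Rrefl.
- move=> [x y]; rewrite /tau_swap /indicator /=.
  by have -> : Rel y x = Rel x y by apply/idP/idP => /Rsym.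
- move=> [[x y] z]; rewrite /gamma12 /gamma23 /gamma13 /indicator /= !natr_andb.
  by have [-> ->] := equivalence_andb x y z Requiv.
Qed.

Lemma E_idempotentP (gamma : X * X -> k) : G_invariant2 act gamma ->
  is_E_idempotent act gamma <->
  exists Rel, G_stable_equivalence act Rel /\ gamma = indicator k Rel.
Proof.
move=> gamma_inv; split=> [gammaE | [Rel [Requiv gamma_eq]]].
- exists (rel_eq1 gamma).
  split; first exact: E_idempotent_equivalence.
  by case: gammaE => _ gamma_idem _ _ _; exact: idempotent_indicator.
- rewrite gamma_eq in gamma_inv *; exact: indicator_E_idempotent gamma_inv Requiv.
Qed.

End IndicatorCorrespondence.

Theorem proposition3p2 (k : fieldType) (X : Type) (act : ordAut -> X -> X)
  (HX : is_Gset act) :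
  (forall gamma : X * X -> k, G_invariant2 act gamma ->
     (is_E_idempotent act gamma <->
      exists Rel : X -> X -> bool,
        G_stable_equivalence act Rel /\ gamma = indicator k Rel))
  /\
  (forall Rel1 Rel2 : X -> X -> bool,
     G_stable_equivalence act Rel1 -> G_stable_equivalence act Rel2 ->
     indicator k Rel1 = indicator k Rel2 -> Rel1 = Rel2).
Proof.
split=> [gamma|Rel1 Rel2 _ _]; [exact: E_idempotentP | exact: indicator_inj].
Qed.
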